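(* Let $\mathcal L$ be a linearly ordered non-discrete MV-algebra. Let $\mathcal F_1\subseteq\mathcal F_2\subseteq\mathcal G$ be filters (in the sense below) with $|\mathcal F_2\setminus\mathcal F_1|\ge 2$. Then $$\mathcal F_1\sqsubseteq\!\!\to\mathcal G\neq\mathcal F_2\sqsubseteq\!\!\to\mathcal G.$$
   Context: $\mathcal L=(L,\oplus,\lnot,0)$ is a linearly ordered MV-algebra. We write $1=\lnot0$, $x\otimes y=\lnot(\lnot x\oplus\lnot y)$, and $x\to y=\lnot x\oplus y$. Non-discrete means no element has an immediate successor or an immediate predecessor. In this setting a ''filter'' means a nonempty proper upward-closed subset $\mathcal F$ of $L$ whose kernel $\mathcal K(\mathcal F)=\{z:\forall a\notin\mathcal F,\ z\to a\notin\mathcal F\}$ equals $\{1\}$. For a filter $\mathcal F$ and $a\in L$, let $\mathcal F_a=\{z: z\to a\notin\mathcal F\}$. For $\mathcal F\subseteq\mathcal G$ we put $\mathcal F\sqsubseteq\!\!\to\mathcal G=\bigcap_{a\in L\setminus\mathcal G}\mathcal F_a$. *)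

From Stdlib Require Import Classical.
Set Implicit Arguments.

Record MVAlgebra := {
  mv_car :> Type;
  mv_oplus : mv_car -> mv_car -> mv_car;
  mv_neg : mv_car -> mv_car;
  mv_zero : mv_car;
  mv_assoc : forall x y z, mv_oplus x (mv_oplus y z) = mv_oplus (mv_oplus x y) z;
  mv_comm : forall x y, mv_oplus x y = mv_oplus y x;
  mv_zero_r : forall x, mv_oplus x mv_zero = x;
  mv_negneg : forall x, mv_neg (mv_neg x) = x;
  mv_one_absorb : forall x, mv_oplus x (mv_neg mv_zero) = mv_neg mv_zero;
  mv_luk : forall x y,
    mv_oplus (mv_neg (mv_oplus (mv_neg x) y)) y =
    mv_oplus (mv_neg (mv_oplus (mv_neg y) x)) x
}.

Section MVDefs.
Variable L : MVAlgebra.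

Definition mv_one : L := mv_neg L (mv_zero L).
Definition mv_otimes (x y : L) : L :=
  mv_neg L (mv_oplus L (mv_neg L x) (mv_neg L y)).
Definition mv_impl (x y : L) : L := mv_oplus L (mv_neg L x) y.

Definition mv_le (x y : L) : Prop := mv_impl x y = mv_one.
Definition mv_lt (x y : L) : Prop := mv_le x y /\ x <> y.

Definition linearly_ordered : Prop := forall x y : L, mv_le x y \/ mv_le y x.

Definition immediate_successor (x y : L) : Prop :=
  mv_lt x y /\ ~ (exists z, mv_lt x z /\ mv_lt z y).
Definition immediate_predecessor (x y : L) : Prop :=
  mv_lt y x /\ ~ (exists z, mv_lt y z /\ mv_lt z x).

Definition non_discrete : Prop :=
  forall x : L, ~ (exists y, immediate_successor x y) /\
                ~ (exists y, immediate_predecessor x y).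

Definition kernel (F : L -> Prop) : L -> Prop :=
  fun z => forall a, ~ F a -> ~ F (mv_impl z a).

Definition is_filter (F : L -> Prop) : Prop :=
  (exists x, F x) /\ (exists x, ~ F x) /\
  (forall x y, F x -> mv_le x y -> F y) /\
  (forall z, kernel F z <-> z = mv_one).

Definition Fa (F : L -> Prop) (a : L) : L -> Prop :=
  fun z => ~ F (mv_impl z a).

(* F ⊑→ G = ⋂_{a ∉ G} F_a *)
Definition sqimp (F G : L -> Prop) : L -> Prop :=
  fun z => forall a, ~ G a -> Fa F a z.

End MVDefs.
Arguments kernel {L}.
Arguments is_filter {L}.
Arguments Fa {L}.
Arguments sqimp {L}.
Arguments mv_le {L}.
Arguments mv_lt {L}.
Arguments mv_impl {L}.
Arguments mv_otimes {L}.
Arguments mv_one {L}.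

From Stdlib Require Import Classical.
Set Implicit Arguments.

(* In a linearly ordered MV-algebra pick two distinct elements of
   F2 \ F1 and name them x < y, so x ∈ F2 and y ∉ F1.  Since y -> x <> 1 and
   the kernel of G is {1}, there is a0 ∉ G with c := (y -> x) -> a0 ∈ G.
   As G is an up-set in a chain, its complement lies below each of its
   elements; hence a0 <= x (x ∈ F2 ⊆ G) and every a ∉ G satisfies a <= c.  The element
   z := x -> a0 then separates the two sets:
   - z ∈ F1 ⊑→ G: for a ∉ G, z -> a <= z -> c = y ∉ F1, so z -> a ∉ F1;
   - z ∉ F2 ⊑→ G: z -> a0 = x ∈ F2, with a0 ∉ G. *)

Section MVArithmetic.
Variable L : MVAlgebra.

Lemma oplus_zero_l (x : L) : mv_oplus L (mv_zero L) x = x.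
Proof. rewrite mv_comm. apply mv_zero_r. Qed.

Lemma neg_one : mv_neg L (@mv_one L) = mv_zero L.
Proof. unfold mv_one. apply mv_negneg. Qed.

Lemma oplus_one_l (x : L) : mv_oplus L (@mv_one L) x = mv_one.
Proof. rewrite mv_comm. apply mv_one_absorb. Qed.

Lemma le_refl (y : L) : mv_le y y.
Proof.
  unfold mv_le, mv_impl.
  pose proof (mv_luk L mv_one y) as H.
  rewrite neg_one, oplus_zero_l in H. rewrite H. apply mv_one_absorb.
Qed.

Lemma impl_impl_le (x y : L) : mv_le x y -> mv_impl (mv_impl y x) x = y.
Proof.
  unfold mv_le, mv_impl. intro Hxy.
  rewrite <- (mv_luk L x y), Hxy, neg_one, oplus_zero_l. reflexivity.
Qed.

Lemma le_antisym (x y : L) : mv_le x y -> mv_le y x -> x = y.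
Proof.
  intros Hxy Hyx. rewrite <- (impl_impl_le Hxy).
  unfold mv_le in Hyx. unfold mv_impl at 1.
  rewrite Hyx, neg_one, oplus_zero_l. reflexivity.
Qed.

Lemma impl_exchange (z u a : L) :
  mv_impl z (mv_impl u a) = mv_impl u (mv_impl z a).
Proof. unfold mv_impl. rewrite !mv_assoc, (mv_comm L (mv_neg L z)). reflexivity. Qed.

Lemma impl_mono_r (z a b : L) : mv_le a b -> mv_le (mv_impl z a) (mv_impl z b).
Proof.
  intro Hab. rewrite <- (impl_impl_le Hab).
  generalize (mv_impl b a). intro d.
  unfold mv_le, mv_impl.
  pose proof (le_refl (mv_oplus L (mv_neg L z) a)) as Hr.
  unfold mv_le, mv_impl in Hr.
  rewrite (mv_comm L (mv_neg L d) a), (mv_assoc L (mv_neg L z) a), mv_assoc, Hr.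
  apply oplus_one_l.
Qed.

Lemma impl_separator_identity (a0 x y : L) :
  mv_le a0 x -> mv_le x y ->
  mv_impl (mv_impl x a0) (mv_impl (mv_impl y x) a0) = y.
Proof.
  intros Ha0x Hxy.
  rewrite impl_exchange, (impl_impl_le Ha0x). apply impl_impl_le, Hxy.
Qed.

End MVArithmetic.

Section LinearFilters.
Variable L : MVAlgebra.
Hypothesis lin : linearly_ordered L.

Lemma outside_below_inside (G : L -> Prop) {a c : L} :
  (forall x y, G x -> mv_le x y -> G y) -> G c -> ~ G a -> mv_le a c.
Proof.
  intros up Gc nGa. destruct (lin a c) as [Hac | Hca]; [exact Hac |].
  exfalso. exact (nGa (up c a Gc Hca)).
Qed.

Lemma ordered_pair_in_difference {F1 F2 : L -> Prop} :
  (exists x y, x <> y /\ F2 x /\ ~ F1 x /\ F2 y /\ ~ F1 y) ->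
  exists x y, mv_le x y /\ x <> y /\ F2 x /\ ~ F1 y.
Proof.
  intros (x & y & Hne & F2x & nF1x & F2y & nF1y).
  destruct (lin x y) as [Hxy | Hyx].
  - exists x, y. auto.
  - exists y, x. auto.
Qed.

(* Membership in F1 ⊑→ G: if a0 <= x <= y, y ∉ F1 and (y -> x) -> a0 ∈ G,
   then x -> a0 lies in F1_a for every a ∉ G, because
   (x -> a0) -> a <= (x -> a0) -> ((y -> x) -> a0) = y. *)
Lemma separator_in_sqimp (F1 G : L -> Prop) (a0 x y : L) :
  (forall u v, F1 u -> mv_le u v -> F1 v) ->
  (forall u v, G u -> mv_le u v -> G v) ->
  mv_le a0 x -> mv_le x y -> ~ F1 y ->
  G (mv_impl (mv_impl y x) a0) ->
  sqimp F1 G (mv_impl x a0).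
Proof.
  intros up1 upG Ha0x Hxy nF1y Gc a nGa F1za.
  assert (Ha_below : mv_le a (mv_impl (mv_impl y x) a0))
    by exact (outside_below_inside G upG Gc nGa).
  apply nF1y.
  rewrite <- (impl_separator_identity Ha0x Hxy).
  exact (up1 _ _ F1za (impl_mono_r (mv_impl x a0) Ha_below)).
Qed.

End LinearFilters.

Lemma separator_notin_sqimp (L : MVAlgebra) (F2 G : L -> Prop) (a0 x : L) :
  mv_le a0 x -> F2 x -> ~ G a0 -> ~ sqimp F2 G (mv_impl x a0).
Proof.
  intros Ha0x F2x nGa0 Hin.
  apply (Hin a0 nGa0). rewrite (impl_impl_le Ha0x). exact F2x.
Qed.

Lemma kernel_witness (L : MVAlgebra) (G : L -> Prop) (z : L) :
  is_filter G -> z <> mv_one -> exists a, ~ G a /\ G (mv_impl z a).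
Proof.
  intros (_ & _ & _ & kerG) Hz.
  assert (nK : ~ kernel G z) by (intro K; apply Hz, kerG, K).
  apply not_all_ex_not in nK as [a Ha].
  apply imply_to_and in Ha as [nGa Gza].
  exists a. split; [exact nGa | exact (NNPP _ Gza)].
Qed.

Theorem mainTheorem13 (L : MVAlgebra) (F1 F2 G : L -> Prop) :
  linearly_ordered L -> non_discrete L ->
  is_filter F1 -> is_filter F2 -> is_filter G ->
  (forall x, F1 x -> F2 x) -> (forall x, F2 x -> G x) ->
  (exists x y, x <> y /\ F2 x /\ ~ F1 x /\ F2 y /\ ~ F1 y) ->
  ~ (forall z, sqimp F1 G z <-> sqimp F2 G z).
Proof.
  intros lin _ HF1 _ HG _ S2G Hdiff Heq.
  destruct (ordered_pair_in_difference lin Hdiff) as (x & y & Hxy & Hne & F2x & nF1y).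
  (* y -> x <> 1, so the kernel of G yields a0 ∉ G with (y -> x) -> a0 ∈ G. *)
  assert (Hyx : mv_impl y x <> mv_one) by (intro E; exact (Hne (le_antisym Hxy E))).
  destruct (kernel_witness HG Hyx) as (a0 & nGa0 & Gc).
  destruct HF1 as (_ & _ & up1 & _).
  destruct HG as (_ & _ & upG & _).
  assert (Ha0x : mv_le a0 x) by exact (outside_below_inside lin G upG (S2G x F2x) nGa0).
  apply (separator_notin_sqimp Ha0x F2x nGa0).
  apply Heq.
  exact (separator_in_sqimp lin F1 G up1 upG Ha0x Hxy nF1y Gc).
Qed.
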